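(* Let $q\ge2$, let $U$ be dual-unitary on $\mathbb{C}^q\otimes\mathbb{C}^q$, and let $\lambda_1,\dots,\lambda_{q^2-1}$ be the nontrivial eigenvalues of $\mathcal{M}_+^U$ (respectively of $\mathcal{M}_-^U$), ordered so that $|\lambda_1|\ge|\lambda_2|\ge\dots\ge|\lambda_{q^2-1}|$. Then $$\sum_{i=1}^{q^2-1}|\lambda_i|^2\le (q^2-1)(1-e_p(U)),\qquad |\lambda_k|\le \sqrt{1-e_p(U)}\,\frac{\sqrt{q^2-1}}{\sqrt k}\quad(1\le k\le q^2-1),$$ in particular $|\lambda_{q^2-1}|\le\sqrt{1-e_p(U)}$ and $|\lambda_1|\le\sqrt{1-e_p(U)}\sqrt{q^2-1}$. Consequently, for $1\le k\le q^2-1$, if $e_p(U)>1-\frac{k}{q^2-1}$ then $|\lambda_j|<1$ for all $j\ge k$; and if $e_p(U)>\frac{q^2-2}{q^2-1}$, then all nontrivial eigenvalues of both $\mathcal{M}_+^{U'}$ and $\mathcal{M}_-^{U'}$ have modulus strictly less than $1$ for every $U'=(u_1\otimes u_2)U(v_1\otimes v_2)$ with $u_1,u_2,v_1,v_2\in U(q)$ (the circuit is mixing whatever the single-site unitaries).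
   Context: Product basis $|i\alpha\rangle$ of $\mathbb{C}^q\otimes\mathbb{C}^q$; realignment $\langle\beta\alpha|X^{R_1}|ji\rangle=\langle i\alpha|X|j\beta\rangle$; $U$ is dual-unitary if $U$ and $U^{R_1}$ are unitary. $S$ is the swap operator. $E(U)=1-q^{-4}\operatorname{tr}[(U^{R_1}U^{R_1\dagger})^2]$, $E(S)=1-1/q^2$, and $e_p(U)=\frac{E(U)+E(US)-E(S)}{E(S)}$. For unitary $U$, $\mathcal{M}_+^U(a)=\frac1q\operatorname{tr}_1[U^\dagger(a\otimes I)U]$ and $\mathcal{M}_-^U(a)=\frac1q\operatorname{tr}_2[U^\dagger(I\otimes a)U]$ on $q\times q$ matrices; each fixes $I$ and preserves the space of traceless matrices, and its nontrivial eigenvalues are the $q^2-1$ eigenvalues (with algebraic multiplicity) of its restriction to traceless matrices. *)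

(* Complex scalars: an arbitrary numClosedFieldType C
   (e.g. the complex numbers); '|x|' is the modulus, x^* the conjugate. *)
From HB Require Import structures.
From mathcomp Require Import all_boot all_order all_algebra.
Set Implicit Arguments.
Unset Strict Implicit.
Unset Printing Implicit Defensive.
Import Order.TTheory GRing.Theory Num.Theory.
Local Open Scope ring_scope.

Section Defs.
Variables (C : numClosedFieldType) (q : nat).

(* Product basis |i alpha> of C^q (x) C^q is indexed by mxvec_index i alpha
   (value i*q + alpha) in 'I_(q*q). *)
Definition idx (i a : 'I_q) : 'I_(q * q) := mxvec_index i a.

Definition adj (m n : nat) (A : 'M[C]_(m, n)) : 'M[C]_(n, m) :=
  (map_mx Num.conj A)^T.

Definition unitary (n : nat) (A : 'M[C]_n) : Prop :=
  A *m adj A = 1%:M /\ adj A *m A = 1%:M.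

Definition kron (A B : 'M[C]_q) : 'M[C]_(q * q) :=
  \sum_(i < q) \sum_(a < q) \sum_(j < q) \sum_(b < q)
     (A i j * B a b) *: delta_mx (idx i a) (idx j b).

Definition realign (X : 'M[C]_(q * q)) : 'M[C]_(q * q) :=
  \sum_(i < q) \sum_(a < q) \sum_(j < q) \sum_(b < q)
     X (idx i a) (idx j b) *: delta_mx (idx b a) (idx j i).

Definition dual_unitary (U : 'M[C]_(q * q)) : Prop :=
  unitary U /\ unitary (realign U).

Definition swap : 'M[C]_(q * q) :=
  \sum_(i < q) \sum_(a < q) delta_mx (idx a i) (idx i a).

Definition Ent (U : 'M[C]_(q * q)) : C :=
  let R := realign U *m adj (realign U) in
  1 - (q%:R ^+ 4)^-1 * \tr (R *m R).

Definition ep (U : 'M[C]_(q * q)) : C :=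
  (Ent U + Ent (U *m swap) - Ent swap) / Ent swap.

Definition ptr1 (X : 'M[C]_(q * q)) : 'M[C]_q :=
  \matrix_(a, b) \sum_(i < q) X (idx i a) (idx i b).
Definition ptr2 (X : 'M[C]_(q * q)) : 'M[C]_q :=
  \matrix_(i, j) \sum_(a < q) X (idx i a) (idx j a).

Definition Mplus (U : 'M[C]_(q * q)) (a : 'M[C]_q) : 'M[C]_q :=
  q%:R^-1 *: ptr1 (adj U *m kron a 1%:M *m U).
Definition Mminus (U : 'M[C]_(q * q)) (a : 'M[C]_q) : 'M[C]_q :=
  q%:R^-1 *: ptr2 (adj U *m kron 1%:M a *m U).

Definition Mchan (plus : bool) (U : 'M[C]_(q * q)) : 'M[C]_q -> 'M[C]_q :=
  if plus then Mplus U else Mminus U.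

(* The traceless subspace of 'M_q, as a row space of vectorized matrices
   (mxvec), with a basis given by the rows of [traceless_basis]. *)
Definition trace_col : 'M[C]_(q * q, 1) :=
  lin1_mx (fun v : 'rV[C]_(q * q) => (\tr (vec_mx v))%:M : 'rV[C]_1).
Definition traceless_basis := row_base (kermx trace_col).

(* Matrix (acting on coordinate row vectors in traceless_basis) of the
   restriction of a linear map f on 'M_q to the traceless subspace
   (which f is assumed/known to preserve). *)
Definition restr_traceless (f : 'M[C]_q -> 'M[C]_q) :=
  traceless_basis *m lin_mx f *m pinvmx traceless_basis.

(* s lists the nontrivial eigenvalues of f (those of its restriction to
   traceless matrices), with algebraic multiplicity. *)
Definition nontrivial_eigs (f : 'M[C]_q -> 'M[C]_q) (s : seq C) : Prop :=
  char_poly (restr_traceless f) = \prod_(x <- s) ('X - x%:P).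

End Defs.

(* Let M be M_+^U or M_-^U.  Unitarity of U makes M unital and trace preserving, so
   on vectorized matrices M is similar to diag(M|traceless, 1) and Schur's inequality
   gives 1 + sum_i |lambda_i|^2 <= ||M||_F^2.  Writing M(|x><y|) in coordinates shows
   ||M||_F^2 = q^-2 tr[(R R^dag)^2] with R = (U S)^R1, i.e. q^2 (1 - E(U S)); since
   U^R1 and S^R1 = S are unitary, E(U) = E(S) = 1 - q^-2 and this is
   1 + (q^2 - 1)(1 - e_p(U)).  For moduli sorted decreasingly,
   k |lambda_k|^2 <= sum_(i <= k) |lambda_i|^2 yields the individual bounds.  Local
   unitaries act on realignments by (transposed, reordered) local unitaries, so they
   preserve dual unitarity, E and hence e_p. *)

From mathcomp Require Import all_boot all_order all_algebra.
From mathcomp Require Import mxred sesquilinear spectral.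
From mathcomp Require Import ring zify.
Import Order.TTheory GRing.Theory Num.Theory.
Local Open Scope ring_scope.
Set Implicit Arguments.
Unset Strict Implicit.
Unset Printing Implicit Defensive.

Section ProductBasis.
Variable q : nat.

Lemma idx_inj : injective (fun p : 'I_q * 'I_q => idx p.1 p.2).
Proof.
have [g idxK _] := curry_mxvec_bij q q.
by move=> [i a] [j b] /= e; rewrite -[(i, a)]idxK // -[(j, b)]idxK //= -/(idx i a) e.
Qed.

Lemma eq_idx (i a j b : 'I_q) : (idx i a == idx j b) = (i == j) && (a == b).
Proof. by rewrite -xpair_eqE; exact: (inj_eq idx_inj (i, a) (j, b)). Qed.

Lemma sum_idx (R : nmodType) (F : 'I_(q * q) -> R) :
  \sum_k F k = \sum_i \sum_a F (idx i a).
Proof. by rewrite (reindex _ (curry_mxvec_bij q q)) pair_big; apply: eq_bigr => -[]. Qed.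

End ProductBasis.

Lemma sum_only1 (R : nmodType) (I : finType) (i0 : I) (F : I -> R) :
  (forall i, i != i0 -> F i = 0) -> \sum_i F i = F i0.
Proof. by move=> F0; rewrite (bigD1 i0) //= big1 ?addr0 // => i /F0. Qed.
Arguments sum_only1 {R I} i0 {F}.

Section Entries.
Variables (C : numClosedFieldType) (q : nat).
Local Notation M2 := 'M[C]_(q * q).
Local Notation M1 := 'M[C]_q.

Lemma eq_mx_idx2 (A B : M2) :
  (forall i a j b, A (idx i a) (idx j b) = B (idx i a) (idx j b)) -> A = B.
Proof.
move=> eqAB; apply/matrixP => k l.
by case/mxvec_indexP: k => i a; case/mxvec_indexP: l => j b; apply: eqAB.
Qed.

Lemma summx4E (G : 'I_q -> 'I_q -> 'I_q -> 'I_q -> M2) k l :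
  (\sum_i \sum_a \sum_j \sum_b G i a j b) k l =
  \sum_i \sum_a \sum_j \sum_b G i a j b k l.
Proof.
rewrite summxE; apply: eq_bigr => i _; rewrite summxE; apply: eq_bigr => a _.
by rewrite summxE; apply: eq_bigr => j _; rewrite summxE.
Qed.

Lemma sum4_only1 (F : 'I_q -> 'I_q -> 'I_q -> 'I_q -> C) (i0 a0 j0 b0 : 'I_q) :
  (forall i a j b, ~~ [&& i == i0, a == a0, j == j0 & b == b0] -> F i a j b = 0) ->
  \sum_i \sum_a \sum_j \sum_b F i a j b = F i0 a0 j0 b0.
Proof.
move=> F0; rewrite (sum_only1 i0) => [|i /negbTE ni]; last first.
  by do 3 rewrite big1 // => ? _; apply: F0; rewrite ni.
rewrite (sum_only1 a0) => [|a /negbTE na]; last first.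
  by do 2 rewrite big1 // => ? _; apply: F0; rewrite eqxx na.
rewrite (sum_only1 j0) => [|j /negbTE nj]; last first.
  by rewrite big1 // => ? _; apply: F0; rewrite !eqxx nj.
by rewrite (sum_only1 b0) // => b /negbTE nb; apply: F0; rewrite !eqxx nb.
Qed.
Arguments sum4_only1 {F} i0 a0 j0 b0.

Lemma kronE (A B : M1) i a j b : kron A B (idx i a) (idx j b) = A i j * B a b.
Proof.
rewrite /kron summx4E (sum4_only1 i a j b) => [|i' a' j' b']; first by rewrite !mxE !eqxx mulr1.
rewrite !mxE !eq_idx.
by case: (eqVneq i' i); case: (eqVneq a' a); case: (eqVneq j' j); case: (eqVneq b' b);
  rewrite //= mulr0.
Qed.

Lemma realignE (X : M2) i a j b :
  realign X (idx b a) (idx j i) = X (idx i a) (idx j b).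
Proof.
rewrite /realign summx4E (sum4_only1 i a j b) => [|i' a' j' b']; first by rewrite !mxE !eqxx mulr1.
rewrite !mxE !eq_idx.
by case: (eqVneq i' i); case: (eqVneq a' a); case: (eqVneq j' j); case: (eqVneq b' b);
  rewrite //= ?andbF mulr0.
Qed.

Lemma adjE m n (A : 'M[C]_(m, n)) i j : adj A i j = (A j i)^*.
Proof. by rewrite !mxE. Qed.

Lemma swapE i a j b : swap C q (idx i a) (idx j b) = ((i == b) && (a == j))%:R.
Proof.
rewrite /swap summxE (sum_only1 a) => [|a' na]; last first.
  by rewrite summxE big1 // => i' _; rewrite mxE !eq_idx (eq_sym a) (negbTE na) andbF.
rewrite summxE (sum_only1 i) => [|i' ni]; last first.
  by rewrite mxE !eq_idx (eq_sym i) (negbTE ni).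
by rewrite mxE !eq_idx !eqxx /= (eq_sym j) (eq_sym b) andbC.
Qed.

Lemma mulmx_swapE (X : M2) k j b : (X *m swap C q) k (idx j b) = X k (idx b j).
Proof.
rewrite mxE sum_idx (sum_only1 b) => [|b' nb]; last first.
  by rewrite big1 // => j' _; rewrite swapE (negbTE nb) mulr0.
rewrite (sum_only1 j) => [|j' nj]; first by rewrite swapE !eqxx mulr1.
by rewrite swapE (negbTE nj) andbF mulr0.
Qed.

Lemma swap_mulmxE (X : M2) k j b : (swap C q *m X) (idx j b) k = X (idx b j) k.
Proof.
rewrite mxE sum_idx (sum_only1 b) => [|b' nb]; last first.
  by rewrite big1 // => j' _; rewrite swapE (eq_sym b) (negbTE nb) andbF mul0r.
rewrite (sum_only1 j) => [|j' nj]; first by rewrite swapE !eqxx mul1r.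
by rewrite swapE (eq_sym j) (negbTE nj) mul0r.
Qed.

End Entries.

Definition frob2 (C : numClosedFieldType) m n (A : 'M[C]_(m, n)) : C :=
  \sum_i \sum_j `|A i j| ^+ 2.

Section Adjoint.
Variable C : numClosedFieldType.

Lemma adj_mulmx m n p (A : 'M[C]_(m, n)) (B : 'M[C]_(n, p)) : adj (A *m B) = adj B *m adj A.
Proof. by rewrite /adj map_mxM trmx_mul. Qed.

Lemma adjK m n (A : 'M[C]_(m, n)) : adj (adj A) = A.
Proof. by apply/matrixP => i j; rewrite !adjE conjCK. Qed.

Lemma adj_trmx m n (A : 'M[C]_(m, n)) : adj A^T = (adj A)^T.
Proof. by apply/matrixP => i j; rewrite !mxE. Qed.

Lemma adj_trmxC m n (A : 'M[C]_(m, n)) : adj A = (A ^t* )%sesqui.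
Proof. by apply/matrixP => i j; rewrite !mxE. Qed.

Lemma frob2_tr m n (A : 'M[C]_(m, n)) : frob2 A = \tr (A *m adj A).
Proof.
rewrite /frob2 /mxtrace; apply: eq_bigr => i _; rewrite mxE; apply: eq_bigr => j _.
by rewrite adjE normCK.
Qed.

Lemma frob2_ge0 m n (A : 'M[C]_(m, n)) : 0 <= frob2 A.
Proof. by apply: sumr_ge0 => i _; apply: sumr_ge0 => j _; rewrite exprn_ge0. Qed.

Lemma frob2_unitary_conj n (P L : 'M[C]_n) : adj P *m P = 1%:M ->
  frob2 (P *m L *m adj P) = frob2 L.
Proof.
move=> PP; rewrite !frob2_tr !adj_mulmx adjK -!mulmxA mxtrace_mulC !mulmxA.
by rewrite -[L *m adj P *m P]mulmxA PP mulmx1 -[L *m adj L *m adj P *m P]mulmxA PP mulmx1.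
Qed.

End Adjoint.

Section Channels.
Variables (C : numClosedFieldType) (q : nat).
Local Notation M2 := 'M[C]_(q * q).
Local Notation M1 := 'M[C]_q.

Lemma lin_mx_idxE (f : M1 -> M1) x y a b :
  lin_mx f (idx x y) (idx a b) = f (delta_mx x y) a b.
Proof. by rewrite /lin_mx /lin1_mx mxE /= /idx vec_mx_delta mxvecE. Qed.

Lemma adj_kron_mulE (U : M2) (A B : M1) k l :
  (adj U *m kron A B *m U) k l =
  \sum_x \sum_c \sum_y \sum_d (U (idx x c) k)^* * (A x y * B c d) * U (idx y d) l.
Proof.
rewrite mxE sum_idx.
under eq_bigr => y _ do under eq_bigr => d _ do rewrite mxE sum_idx mulr_suml.
under eq_bigr => y _ do under eq_bigr => d _ do under eq_bigr => x _ do rewrite mulr_suml.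
under eq_bigr => y _ do rewrite exchange_big.
under eq_bigr => y _ do under eq_bigr => x _ do rewrite exchange_big.
rewrite exchange_big; under eq_bigr => x _ do rewrite exchange_big.
apply: eq_bigr => x _; apply: eq_bigr => c _; apply: eq_bigr => y _; apply: eq_bigr => d _.
by rewrite adjE kronE.
Qed.

Lemma Mplus_deltaE (U : M2) x0 y0 a b :
  Mplus U (delta_mx x0 y0) a b =
  q%:R^-1 * \sum_i \sum_c (U (idx x0 c) (idx i a))^* * U (idx y0 c) (idx i b).
Proof.
rewrite /Mplus !mxE; congr (_ * _); apply: eq_bigr => i _.
rewrite adj_kron_mulE (sum_only1 x0) => [|x nx]; last first.
  by do 3 (rewrite big1 // => ? _); rewrite !mxE (negbTE nx) /= mul0r mulr0 mul0r.
apply: eq_bigr => c _.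
rewrite (sum_only1 y0) => [|y ny]; last first.
  by rewrite big1 // => ? _; rewrite !mxE (negbTE ny) andbF /= mul0r mulr0 mul0r.
rewrite (sum_only1 c) => [|d nd]; last first.
  by rewrite !mxE eq_sym (negbTE nd) /= mulr0 mulr0 mul0r.
by rewrite !mxE !eqxx /= !mulr1.
Qed.

Lemma Mminus_deltaE (U : M2) x0 y0 i j :
  Mminus U (delta_mx x0 y0) i j =
  q%:R^-1 * \sum_a \sum_c (U (idx c x0) (idx i a))^* * U (idx c y0) (idx j a).
Proof.
rewrite /Mminus !mxE; congr (_ * _); apply: eq_bigr => a _.
rewrite adj_kron_mulE; apply: eq_bigr => x _.
rewrite (sum_only1 x0) => [|c nc]; last first.
  by do 2 (rewrite big1 // => ? _); rewrite !mxE (negbTE nc) /= mulr0 mulr0 mul0r.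
rewrite (sum_only1 x) => [|y ny]; last first.
  by rewrite big1 // => ? _; rewrite !mxE eq_sym (negbTE ny) /= mul0r mulr0 mul0r.
rewrite (sum_only1 y0) => [|d nd]; last first.
  by rewrite !mxE (negbTE nd) andbF /= mulr0 mulr0 mul0r.
by rewrite !mxE !eqxx /= !mulr1.
Qed.

End Channels.

Section FrobeniusChannel.
Variables (C : numClosedFieldType) (q : nat) (U : 'M[C]_(q * q)).
Let R := realign (U *m swap C q).

Lemma realign_mulmx_swapE i a j b : R (idx b a) (idx j i) = U (idx i a) (idx b j).
Proof. by rewrite /R realignE mulmx_swapE. Qed.

Lemma tr_sqrE (K : 'M[C]_(q * q)) : \tr (K *m K) =
  \sum_i \sum_x \sum_j \sum_y K (idx i x) (idx j y) * K (idx j y) (idx i x).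
Proof.
rewrite /mxtrace sum_idx; apply: eq_bigr => i _; apply: eq_bigr => x _.
by rewrite mxE sum_idx.
Qed.

Lemma frob2_lin_mx (f : 'M[C]_q -> 'M[C]_q) : frob2 (lin_mx f) =
  \sum_x \sum_y \sum_a \sum_b `|f (delta_mx x y) a b| ^+ 2.
Proof.
rewrite /frob2 sum_idx; apply: eq_bigr => x _; apply: eq_bigr => y _.
by rewrite sum_idx; apply: eq_bigr => a _; apply: eq_bigr => b _; rewrite lin_mx_idxE.
Qed.

Lemma frob2_Mminus : frob2 (lin_mx (Mminus U)) = q%:R^-2 * \tr ((R *m adj R) *m (R *m adj R)).
Proof.
rewrite frob2_lin_mx tr_sqrE !mulr_sumr.
under eq_bigr => x _ do rewrite exchange_big.
rewrite exchange_big; apply: eq_bigr => i _; rewrite mulr_sumr; apply: eq_bigr => x _.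
rewrite mulr_sumr exchange_big; apply: eq_bigr => j _; rewrite mulr_sumr; apply: eq_bigr => y _.
rewrite normCK Mminus_deltaE rmorphM /= rmorph_sum /= fmorphV /= conjC_nat !mxE !sum_idx.
rewrite mulrACA -expr2 exprVn [X in _ = _ * X]mulrC; congr (_ * (_ * _)).
  by apply: eq_bigr => a _; apply: eq_bigr => c _; rewrite adjE !realign_mulmx_swapE mulrC.
apply: eq_bigr => a _; rewrite rmorph_sum; apply: eq_bigr => c _.
by rewrite rmorphM /= conjCK adjE !realign_mulmx_swapE.
Qed.

Lemma tr_sqr_mulmx_adjC : \tr ((R *m adj R) *m (R *m adj R)) = \tr ((adj R *m R) *m (adj R *m R)).
Proof. by rewrite -!mulmxA mxtrace_mulC !mulmxA. Qed.

Lemma frob2_Mplus : frob2 (lin_mx (Mplus U)) = q%:R^-2 * \tr ((R *m adj R) *m (R *m adj R)).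
Proof.
rewrite tr_sqr_mulmx_adjC frob2_lin_mx tr_sqrE !mulr_sumr.
under eq_bigr => x _ do rewrite exchange_big.
rewrite exchange_big; apply: eq_bigr => a _; rewrite mulr_sumr; apply: eq_bigr => x _.
rewrite mulr_sumr exchange_big; apply: eq_bigr => b _; rewrite mulr_sumr; apply: eq_bigr => y _.
rewrite normCK Mplus_deltaE rmorphM /= rmorph_sum /= fmorphV /= conjC_nat !mxE !sum_idx.
rewrite mulrACA -expr2 exprVn; congr (_ * (_ * _)).
  by apply: eq_bigr => i _; apply: eq_bigr => c _; rewrite adjE !realign_mulmx_swapE.
apply: eq_bigr => i _; rewrite rmorph_sum; apply: eq_bigr => c _.
by rewrite rmorphM /= conjCK adjE !realign_mulmx_swapE mulrC.
Qed.

Lemma frob2_Mchan plus :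
  frob2 (lin_mx (Mchan plus U)) = q%:R^-2 * \tr ((R *m adj R) *m (R *m adj R)).
Proof. by case: plus; [exact: frob2_Mplus | exact: frob2_Mminus]. Qed.

End FrobeniusChannel.

Section Entangling.
Variables (C : numClosedFieldType) (q : nat).
Hypothesis q_neq0 : q%:R != 0 :> C.

Lemma Ent_unitary (X : 'M[C]_(q * q)) : unitary (realign X) -> Ent X = 1 - q%:R^-2.
Proof. by case=> XX _; rewrite /Ent XX mul1mx mxtrace1 natrM; field. Qed.

Lemma realign_swap : realign (swap C q) = swap C q.
Proof. by apply: eq_mx_idx2 => b a j i; rewrite realignE !swapE (eq_sym i). Qed.

Lemma adj_swap : adj (swap C q) = swap C q.
Proof.
by apply: eq_mx_idx2 => b a j i; rewrite adjE !swapE conjC_nat andbC eq_sym (eq_sym a).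
Qed.

Lemma swapK : swap C q *m swap C q = 1%:M.
Proof.
apply: eq_mx_idx2 => b a j i; rewrite swap_mulmxE swapE !mxE eq_idx.
by rewrite (eq_sym a) andbC.
Qed.

Lemma unitary_swap : unitary (swap C q).
Proof. by rewrite /unitary adj_swap swapK. Qed.

Lemma Ent_swap : Ent (swap C q) = 1 - q%:R^-2.
Proof. by apply: Ent_unitary; rewrite realign_swap; exact: unitary_swap. Qed.

End Entangling.

Lemma frob2_Mchan_ep (C : numClosedFieldType) (q : nat) (U : 'M[C]_(q * q)) plus :
  (2 <= q)%N -> dual_unitary U ->
  frob2 (lin_mx (Mchan plus U)) = 1 + (q ^ 2 - 1)%:R * (1 - ep U).
Proof.
move=> q_ge2 [_ uRU].
have q_neq0 : q%:R != 0 :> C by rewrite pnatr_eq0 -lt0n (leq_trans _ q_ge2).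
have q2_neq1 : q%:R ^+ 2 != 1 :> C.
  by rewrite -natrX pnatr_eq1 -mulnn; apply/eqP; nia.
rewrite frob2_Mchan /ep (Ent_unitary q_neq0 uRU) Ent_swap // /Ent /=.
rewrite natrB ?expn_gt0 ?(leq_trans _ q_ge2) // natrX.
by field; rewrite q_neq0 subr_eq0 q2_neq1.
Qed.

Lemma det_similar (R : comNzRingType) n (A M B : 'M[R]_n) :
  A *m B = 1%:M -> \det (A *m M *m B) = \det M.
Proof. by move=> AB; rewrite !det_mulmx mulrAC -det_mulmx AB det1 mul1r. Qed.

Lemma char_poly_similar (R : idomainType) n (P L : 'M[R]_n) : P \in unitmx ->
  char_poly (P *m L *m invmx P) = char_poly L.
Proof.
move=> Pu; rewrite /char_poly /char_poly_mx.
rewrite -[in RHS](@det_similar _ _ (map_mx polyC P) _ (map_mx polyC (invmx P))); last first.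
  by rewrite -map_mxM mulmxV // map_mx1.
congr (\det _); rewrite !map_mxM mulmxBr mulmxBl; congr (_ - _).
by rewrite scalar_mxC -mulmxA -map_mxM mulmxV // map_mx1 mulmx1.
Qed.

(* Schur's inequality: a unitary triangularization puts the eigenvalues on the diagonal. *)
Lemma sum_norm2_le_frob2 (C : numClosedFieldType) n (L : 'M[C]_n) (s : seq C) :
  char_poly L = \prod_(x <- s) ('X - x%:P) -> \sum_(x <- s) `|x| ^+ 2 <= frob2 L.
Proof.
case: n L => [|n] L charL.
  have := size_char_poly L; rewrite charL size_prod_XsubC; case: s {charL} => // _.
  by rewrite big_nil frob2_ge0.
have [P /unitarymxP PP trigL] := Schur L isT.
rewrite -adj_trmxC in PP; have PP' := mulmx1C PP.
have Pu : P \in unitmx by case: (mulmx1_unit PP).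
have invP : invmx P = adj P by rewrite -[invmx P]mul1mx -PP' -mulmxA mulmxV // mulmx1.
move: trigL; rewrite /similar_to conjumx // => /char_poly_trig.
rewrite char_poly_similar // charL invP => charT.
have eigL : perm_eq s [seq (P *m L *m adj P) i i | i <- enum 'I_n.+1].
  by apply: prod_XsubC_eq; rewrite charT big_map big_enum.
rewrite (perm_big _ eigL) big_map big_enum /= -(frob2_unitary_conj L PP') /frob2.
apply: ler_sum => i _.
by rewrite (bigD1 i) //= lerDl sumr_ge0 // => j _; rewrite exprn_ge0.
Qed.

Section FixedVector.
Variable F : fieldType.

Lemma row_free_col_mx r n (B : 'M[F]_(r, n)) (v : 'rV[F]_n) (c : 'cV[F]_n) :
  row_free B -> B *m c = 0 -> (v *m c) 0 0 != 0 -> row_free (col_mx B v).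
Proof.
move=> freeB Bc vc; rewrite -kermx_eq0; apply/eqP.
set K := kermx _; have KBv : K *m col_mx B v = 0 by rewrite mulmx_ker.
rewrite -[K]hsubmxK in KBv *; rewrite mul_row_col in KBv.
have Kr0 : rsubmx K = 0.
  have := congr1 (mulmx^~ c) KBv; rewrite mulmxDl -!mulmxA Bc mulmx0 add0r mul0mx.
  rewrite [v *m c]mx11_scalar mul_mx_scalar => /eqP.
  by rewrite scaler_eq0 (negbTE vc) /= => /eqP.
rewrite Kr0 mul0mx addr0 in KBv.
have Kl0 : lsubmx K = 0 by apply/eqP; rewrite -(mulmx_free_eq0 _ freeB) KBv.
by rewrite Kl0 Kr0 row_mx0.
Qed.

Lemma char_poly_mx11_1 : char_poly (1%:M : 'M[F]_1) = 'X - 1.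
Proof. by rewrite /char_poly det_mx11 /char_poly_mx !mxE /= mulr1n. Qed.

(* v spans a fixed line of L complementary to the L-stable hyperplane spanned by B
   (the kernel of the linear form c), so L is similar to diag(L|B, 1). *)
Lemma char_poly_fixed_split n r (L : 'M[F]_n) (B : 'M_(r, n)) (v : 'rV[F]_n)
    (c : 'cV[F]_n) :
  (r + 1 = n)%N -> row_free B -> B *m c = 0 -> (v *m c) 0 0 != 0 ->
  (B *m L <= B)%MS -> v *m L = v ->
  char_poly L = char_poly (conjmx B L) * ('X - 1).
Proof.
move=> rn; case: n / rn in L B v c *.
move=> freeB Bc vc BL vL.
set P := col_mx B v.
have Pu : P \in unitmx by rewrite -row_free_unit (row_free_col_mx freeB Bc vc).
set D := block_mx (conjmx B L) 0 0 (1%:M : 'M[F]_1).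
have PL : P *m L = D *m P.
  rewrite /P mul_col_mx mul_block_col !mul0mx mul1mx addr0 add0r vL.
  by rewrite /conjmx mulmxKpV.
have LD : L = invmx P *m D *m invmx (invmx P).
  by rewrite invmxK -mulmxA -PL mulmxA mulVmx ?mul1mx.
rewrite [in LHS]LD char_poly_similar ?unitmx_inv // /D /char_poly /char_poly_mx.
rewrite (scalar_mx_block r 1) map_block_mx !raddf0 opp_block_mx add_block_mx !subrr.
by rewrite det_ublock -char_poly_mx11_1.
Qed.

End FixedVector.

Lemma mxtrace_delta (R : pzRingType) n (i j : 'I_n) : \tr (delta_mx i j : 'M[R]_n) = (i == j)%:R.
Proof.
rewrite /mxtrace (sum_only1 i) => [|k nk]; first by rewrite mxE eqxx.
by rewrite mxE (negbTE nk).
Qed.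

Section Traceless.
Variables (C : numClosedFieldType) (q : nat).
Hypothesis q_gt0 : (0 < q)%N.
Local Notation M1 := 'M[C]_q.

Lemma trace_colE i a : trace_col C q (idx i a) 0 = (i == a)%:R.
Proof.
by rewrite /trace_col /lin1_mx mxE /= /idx vec_mx_delta mxE eqxx mulr1n mxtrace_delta.
Qed.

Lemma mxvec1E a b : mxvec (1%:M : M1) 0 (idx a b) = (a == b)%:R.
Proof. by rewrite /idx mxvecE mxE. Qed.

Lemma mxvec1_trace_col : (mxvec (1%:M : M1) *m trace_col C q) 0 0 = q%:R.
Proof.
rewrite mxE sum_idx (eq_bigr (fun _ => 1)) ?sumr_const ?card_ord // => i _.
rewrite (sum_only1 i) => [|a na]; first by rewrite mxvec1E trace_colE eqxx mulr1.
by rewrite mxvec1E (eq_sym i) (negbTE na) mul0r.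
Qed.

Lemma rank_trace_col : \rank (trace_col C q) = 1%N.
Proof.
apply/eqP; rewrite eqn_leq rank_leq_col /= lt0n mxrank_eq0.
apply/eqP => /matrixP/(_ (idx (Ordinal q_gt0) (Ordinal q_gt0)) 0).
by rewrite trace_colE eqxx mxE => /eqP; rewrite oner_eq0.
Qed.

Lemma rank_traceless : (\rank (kermx (trace_col C q)) + 1 = q * q)%N.
Proof. by rewrite mxrank_ker rank_trace_col subnK // muln_gt0 q_gt0. Qed.

Variable f : M1 -> M1.
Hypothesis tr_f_delta : forall x y, \tr (f (delta_mx x y)) = (x == y)%:R.
Hypothesis f1 : forall a b, \sum_x f (delta_mx x x) a b = (a == b)%:R.

Lemma lin_mx_trace_col : lin_mx f *m trace_col C q = trace_col C q.
Proof.
apply/colP => k; case/mxvec_indexP: k => x y.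
rewrite -/(idx x y) mxE sum_idx trace_colE -tr_f_delta.
rewrite /mxtrace; apply: eq_bigr => a _; rewrite (sum_only1 a) => [|b nb].
  by rewrite lin_mx_idxE trace_colE eqxx mulr1.
by rewrite trace_colE (eq_sym a) (negbTE nb) mulr0.
Qed.

Lemma mxvec1_lin_mx : mxvec (1%:M : M1) *m lin_mx f = mxvec (1%:M : M1).
Proof.
apply/rowP => k; case/mxvec_indexP: k => a b.
rewrite -/(idx a b) mxE sum_idx mxvec1E -f1.
apply: eq_bigr => x _; rewrite (sum_only1 x) => [|y ny].
  by rewrite mxvec1E eqxx mul1r lin_mx_idxE.
by rewrite mxvec1E (eq_sym x) (negbTE ny) mul0r.
Qed.

Lemma char_poly_lin_mx_split :
  char_poly (lin_mx f) = char_poly (restr_traceless f) * ('X - 1).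
Proof.
have Bc : traceless_basis C q *m trace_col C q = 0.
  by apply/eqP; rewrite -sub_kermx eq_row_base.
apply: (char_poly_fixed_split rank_traceless (row_base_free _) Bc); last exact: mxvec1_lin_mx.
  by rewrite mxvec1_trace_col pnatr_eq0 -lt0n.
by rewrite /traceless_basis eq_row_base sub_kermx -mulmxA lin_mx_trace_col -sub_kermx eq_row_base.
Qed.

End Traceless.

Section UnitalTracePreserving.
Variables (C : numClosedFieldType) (q : nat).
Hypothesis q_gt0 : (0 < q)%N.
Local Notation M2 := 'M[C]_(q * q).
Variable U : M2.
Hypothesis uU : unitary U.

Lemma mean_const (b : bool) : q%:R^-1 * \sum_(c < q) (b%:R : C) = b%:R.
Proof.
rewrite sumr_const card_ord -(mulr_natr (b%:R : C) q) mulrCA mulVf ?mulr1 //.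
by rewrite pnatr_eq0 -lt0n.
Qed.

Lemma mulmx_adjE k l : (U *m adj U) k l = \sum_i \sum_a U k (idx i a) * (U l (idx i a))^*.
Proof. by rewrite mxE sum_idx; apply: eq_bigr => i _; apply: eq_bigr => a _; rewrite adjE. Qed.

Lemma adj_mulmxE k l : (adj U *m U) k l = \sum_i \sum_a (U (idx i a) k)^* * U (idx i a) l.
Proof. by rewrite mxE sum_idx; apply: eq_bigr => i _; apply: eq_bigr => a _; rewrite adjE. Qed.

Lemma mx1_idxE (i a j b : 'I_q) : (1%:M : M2) (idx i a) (idx j b) = ((i == j) && (a == b))%:R.
Proof. by rewrite mxE eq_idx. Qed.

Lemma tr_Mplus_delta x y : \tr (Mplus U (delta_mx x y)) = (x == y)%:R.
Proof.
rewrite /mxtrace; under eq_bigr => a _ do rewrite Mplus_deltaE.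
rewrite -mulr_sumr -(mean_const (x == y)); congr (_ * _).
under eq_bigr => a _ do rewrite exchange_big.
rewrite exchange_big; apply: eq_bigr => c _; rewrite exchange_big.
have := congr1 (fun M : M2 => M (idx y c) (idx x c)) uU.1.
rewrite mulmx_adjE mx1_idxE eqxx andbT eq_sym => <-.
by apply: eq_bigr => i _; apply: eq_bigr => a _; rewrite mulrC.
Qed.

Lemma Mplus_sum_diag_delta a b : \sum_x Mplus U (delta_mx x x) a b = (a == b)%:R.
Proof.
under eq_bigr => x _ do rewrite Mplus_deltaE.
rewrite -mulr_sumr -(mean_const (a == b)); congr (_ * _).
rewrite exchange_big; apply: eq_bigr => i _.
have := congr1 (fun M : M2 => M (idx i a) (idx i b)) uU.2.
by rewrite adj_mulmxE mx1_idxE eqxx => <-.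
Qed.

Lemma tr_Mminus_delta x y : \tr (Mminus U (delta_mx x y)) = (x == y)%:R.
Proof.
rewrite /mxtrace; under eq_bigr => a _ do rewrite Mminus_deltaE.
rewrite -mulr_sumr -(mean_const (x == y)); congr (_ * _).
under eq_bigr => i _ do rewrite exchange_big.
rewrite exchange_big; apply: eq_bigr => c _.
have := congr1 (fun M : M2 => M (idx c y) (idx c x)) uU.1.
rewrite mulmx_adjE mx1_idxE eqxx /= eq_sym => <-.
by apply: eq_bigr => i _; apply: eq_bigr => a _; rewrite mulrC.
Qed.

Lemma Mminus_sum_diag_delta i j : \sum_x Mminus U (delta_mx x x) i j = (i == j)%:R.
Proof.
under eq_bigr => x _ do rewrite Mminus_deltaE.
rewrite -mulr_sumr -(mean_const (i == j)); congr (_ * _).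
rewrite exchange_big; apply: eq_bigr => a _; rewrite exchange_big.
have := congr1 (fun M : M2 => M (idx i a) (idx j a)) uU.2.
by rewrite adj_mulmxE mx1_idxE eqxx andbT => <-.
Qed.

Lemma char_poly_Mchan plus : char_poly (lin_mx (Mchan plus U)) =
  char_poly (restr_traceless (Mchan plus U)) * ('X - 1).
Proof.
case: plus; apply: char_poly_lin_mx_split => //.
- exact: tr_Mplus_delta.
- exact: Mplus_sum_diag_delta.
- exact: tr_Mminus_delta.
- exact: Mminus_sum_diag_delta.
Qed.

End UnitalTracePreserving.

Section NontrivialEigs.
Variables (C : numClosedFieldType) (q : nat) (U : 'M[C]_(q * q)) (plus : bool) (s : seq C).
Hypothesis q_gt0 : (0 < q)%N.
Hypothesis uU : unitary U.
Hypothesis eigs : nontrivial_eigs (Mchan plus U) s.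

Lemma size_nontrivial_eigs : size s = (q ^ 2 - 1)%N.
Proof.
have := size_char_poly (restr_traceless (Mchan plus U)).
rewrite eigs size_prod_XsubC => -[->].
move: (rank_traceless C q_gt0); move: (\rank _) => r rq.
by rewrite -mulnn -rq addnK.
Qed.

Lemma sum_nontrivial_eigs_le_frob2 :
  1 + \sum_(x <- s) `|x| ^+ 2 <= frob2 (lin_mx (Mchan plus U)).
Proof.
have charM : char_poly (lin_mx (Mchan plus U)) = \prod_(x <- 1 :: s) ('X - x%:P).
  by rewrite big_cons mulrC -eigs char_poly_Mchan.
by have := sum_norm2_le_frob2 charM; rewrite big_cons normr1 expr1n.
Qed.

End NontrivialEigs.

Lemma sum_nontrivial_eigs_le_ep (C : numClosedFieldType) (q : nat) (U : 'M[C]_(q * q))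
    plus s :
  (2 <= q)%N -> dual_unitary U -> nontrivial_eigs (Mchan plus U) s ->
  \sum_(x <- s) `|x| ^+ 2 <= (q ^ 2 - 1)%:R * (1 - ep U).
Proof.
move=> q_ge2 duU eigs; have := sum_nontrivial_eigs_le_frob2 (ltnW q_ge2) duU.1 eigs.
by rewrite frob2_Mchan_ep // lerD2l.
Qed.

Section SpectralBounds.
Variables (C : numClosedFieldType) (N : nat) (e : C) (s : seq C).
Hypothesis N_gt0 : (0 < N)%N.
Hypothesis sum_le : \sum_(x <- s) `|x| ^+ 2 <= N%:R * (1 - e).

Lemma one_sub_ge0 : 0 <= 1 - e.
Proof.
rewrite -(pmulr_rge0 _ (ltr0Sn _ N.-1)) prednK //.
by apply: le_trans sum_le; apply: sumr_ge0 => x _; rewrite exprn_ge0.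
Qed.

Lemma norm_lt1_mem : (N - 1)%:R / N%:R < e -> forall x, x \in s -> `|x| < 1.
Proof.
move=> e_gt x xs.
have N_pos : 0 < (N%:R : C) by rewrite ltr0n.
rewrite -(ltr_pXn2r (n := 2)) ?nnegrE ?normr_ge0 ?ler01 // expr1n.
apply: le_lt_trans (_ : `|x| ^+ 2 <= \sum_(y <- s) `|y| ^+ 2) _.
  by rewrite (big_rem x) //= lerDl sumr_ge0 // => y _; rewrite exprn_ge0.
apply: le_lt_trans sum_le _; rewrite -[X in _ < X](mulfV (lt0r_neq0 N_pos)) ltr_pM2l //.
move: e_gt; rewrite natrB // mulrBl mulfV ?lt0r_neq0 // mul1r.
by rewrite !ltrBlDr addrC.
Qed.

Hypothesis size_s : size s = N.
Hypothesis s_sorted : sorted (fun x y => `|y| <= `|x|) s.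

Lemma sorted_norm2_mul_le k j : (1 <= k <= j)%N -> (j <= N)%N ->
  k%:R * `|s`_j.-1| ^+ 2 <= N%:R * (1 - e).
Proof.
move=> /andP[k_gt0 kj] jN; apply: le_trans sum_le.
rewrite (big_nth 0) size_s (big_cat_nat _ (n := k)) ?(leq_trans kj) //=.
rewrite -[X in X <= _]addr0; apply: lerD; last first.
  by apply: sumr_ge0 => i _; rewrite exprn_ge0.
rewrite mulr_natl -[in X in X <= _](subn0 k) -sumr_const_nat ler_sum_nat // => i /andP[_ ik].
rewrite ler_pXn2r ?nnegrE ?normr_ge0 //.
have := @sorted_leq_nth C _ _ _ 0 s s_sorted i j.-1; apply; rewrite ?inE ?size_s; try lia.
- by move=> x y z yx zx; apply: le_trans zx yx.
- by move=> x.
Qed.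

Lemma sorted_norm_le k : (1 <= k <= N)%N ->
  `|s`_k.-1| <= sqrtC (1 - e) * sqrtC N%:R / sqrtC k%:R.
Proof.
move=> /andP[k_gt0 kN].
have sqrtk_gt0 : 0 < sqrtC (k%:R : C) by rewrite sqrtC_gt0 ltr0n.
rewrite ler_pdivlMr // -(ler_pXn2r (n := 2)) ?nnegrE ?mulr_ge0 ?sqrtC_ge0 ?ler0n ?one_sub_ge0 //.
rewrite !exprMn !sqrtCK mulrC [(1 - e) * _]mulrC.
by apply: sorted_norm2_mul_le; rewrite ?k_gt0 ?leqnn.
Qed.

Lemma sorted_norm_lt1 k : (1 <= k <= N)%N -> 1 - k%:R / N%:R < e ->
  forall j, (k <= j <= N)%N -> `|s`_j.-1| < 1.
Proof.
move=> /andP[k_gt0 kN] e_gt j /andP[kj jN].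
have N_pos : 0 < (N%:R : C) by rewrite ltr0n.
have N1e_lt : N%:R * (1 - e) < k%:R.
  have -> : (k%:R : C) = N%:R * (k%:R / N%:R) by rewrite mulrCA mulfV ?mulr1 ?lt0r_neq0.
  by rewrite ltr_pM2l //; move: e_gt; rewrite !ltrBlDl addrC.
rewrite -(ltr_pXn2r (n := 2)) ?nnegrE ?normr_ge0 ?ler01 // expr1n.
rewrite -(ltr_pM2l (x := k%:R)) ?ltr0n // mulr1.
by apply: le_lt_trans N1e_lt; rewrite sorted_norm2_mul_le ?k_gt0.
Qed.

End SpectralBounds.

Section LocalUnitaries.
Variables (C : numClosedFieldType) (q : nat).
Local Notation M2 := 'M[C]_(q * q).
Local Notation M1 := 'M[C]_q.

Lemma kron_mulmx (A B A' B' : M1) : kron A B *m kron A' B' = kron (A *m A') (B *m B').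
Proof.
apply: eq_mx_idx2 => i a j b; rewrite kronE !mxE sum_idx big_distrl /=.
apply: eq_bigr => k _; rewrite mulr_sumr; apply: eq_bigr => c _.
by rewrite !kronE mulrACA.
Qed.

Lemma adj_kron (A B : M1) : adj (kron A B) = kron (adj A) (adj B).
Proof. by apply: eq_mx_idx2 => i a j b; rewrite adjE !kronE !adjE rmorphM. Qed.

Lemma kron1 : kron (1%:M : M1) 1%:M = 1%:M.
Proof.
apply: eq_mx_idx2 => i a j b; rewrite kronE !mxE eq_idx.
by case: (i == j); case: (a == b); rewrite ?mulr1 ?mul1r ?mulr0.
Qed.

Lemma unitary_mulmx n (A B : 'M[C]_n) : unitary A -> unitary B -> unitary (A *m B).
Proof.
move=> [AA' A'A] [BB' B'B]; rewrite /unitary adj_mulmx; split.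
  by rewrite mulmxA -(mulmxA A) BB' mulmx1 AA'.
by rewrite mulmxA -(mulmxA (adj B)) A'A mulmx1 B'B.
Qed.

Lemma unitary_kron (A B : M1) : unitary A -> unitary B -> unitary (kron A B).
Proof.
by move=> [AA' A'A] [BB' B'B]; rewrite /unitary adj_kron !kron_mulmx AA' A'A BB' B'B kron1.
Qed.

Lemma unitary_trmx n (A : 'M[C]_n) : unitary A -> unitary A^T.
Proof. by move=> [AA' A'A]; rewrite /unitary adj_trmx -!trmx_mul AA' A'A !trmx1. Qed.

Lemma mulmx3E m n p r (P : 'M[C]_(m, n)) (X : 'M[C]_(n, p)) (Q : 'M[C]_(p, r)) i j :
  (P *m X *m Q) i j = \sum_k \sum_l P i k * X k l * Q l j.
Proof.
rewrite mxE exchange_big; apply: eq_bigr => l _; rewrite mxE big_distrl /=.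
by apply: eq_bigr => k _.
Qed.

Lemma realign_kron (A B A' B' : M1) (X : M2) :
  realign (kron A B *m X *m kron A' B') = kron B'^T B *m realign X *m kron A' A^T.
Proof.
apply: eq_mx_idx2 => b a j i; rewrite realignE !mulmx3E !sum_idx.
under eq_bigr => b' _ do under eq_bigr => a' _ do rewrite sum_idx.
under [RHS]eq_bigr => b' _ do under eq_bigr => a' _ do rewrite sum_idx.
under [RHS]eq_bigr => b' _ do under eq_bigr => a' _ do rewrite exchange_big.
under [RHS]eq_bigr => b' _ do rewrite exchange_big.
rewrite [RHS]exchange_big.
under [RHS]eq_bigr => i' _ do rewrite exchange_big.
under [RHS]eq_bigr => i' _ do under eq_bigr => a' _ do rewrite exchange_big.
apply: eq_bigr => i' _; apply: eq_bigr => a' _; apply: eq_bigr => j' _; apply: eq_bigr => b' _.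
by rewrite !kronE realignE !mxE; ring.
Qed.

Lemma kron_mulmx_swap (A B : M1) : kron A B *m swap C q = swap C q *m kron B A.
Proof. by apply: eq_mx_idx2 => i a j b; rewrite mulmx_swapE swap_mulmxE !kronE mulrC. Qed.

Lemma tr_sqr_unitary_conj (K H : M2) : unitary K ->
  \tr ((K *m H *m adj K) *m (K *m H *m adj K)) = \tr (H *m H).
Proof.
move=> [_ K'K]; rewrite -!mulmxA [adj K *m (K *m _)]mulmxA K'K mul1mx.
by rewrite mxtrace_mulC -!mulmxA K'K mulmx1.
Qed.

Lemma Ent_unitary_mulmx (X Y K1 K2 : M2) : unitary K1 -> unitary K2 ->
  realign Y = K1 *m realign X *m K2 -> Ent Y = Ent X.
Proof.
move=> uK1 [K2K2' _] RY; rewrite /Ent /= RY !adj_mulmx.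
have -> : K1 *m realign X *m K2 *m (adj K2 *m (adj (realign X) *m adj K1)) =
          K1 *m (realign X *m adj (realign X)) *m adj K1.
  by rewrite !mulmxA -(mulmxA _ K2) K2K2' mulmx1.
by rewrite tr_sqr_unitary_conj.
Qed.

Lemma Ent_kron_mulmx (a1 a2 b1 b2 : M1) (X : M2) :
  unitary a1 -> unitary a2 -> unitary b1 -> unitary b2 ->
  Ent (kron a1 a2 *m X *m kron b1 b2) = Ent X.
Proof.
move=> ua1 ua2 ub1 ub2.
apply: (@Ent_unitary_mulmx _ _ (kron b2^T a2) (kron b1 a1^T)); last exact: realign_kron.
  by apply: unitary_kron => //; apply: unitary_trmx.
by apply: unitary_kron => //; apply: unitary_trmx.
Qed.

Variables (U : M2) (u1 u2 v1 v2 : M1).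
Hypotheses (uu1 : unitary u1) (uu2 : unitary u2) (uv1 : unitary v1) (uv2 : unitary v2).

Lemma dual_unitary_kron_mulmx :
  dual_unitary U -> dual_unitary (kron u1 u2 *m U *m kron v1 v2).
Proof.
move=> [uU uRU]; split.
  by apply: unitary_mulmx; [apply: unitary_mulmx|]; try apply: unitary_kron.
rewrite realign_kron; apply: unitary_mulmx; [apply: unitary_mulmx|] => //.
  by apply: unitary_kron => //; apply: unitary_trmx.
by apply: unitary_kron => //; apply: unitary_trmx.
Qed.

Lemma ep_kron_mulmx : ep (kron u1 u2 *m U *m kron v1 v2) = ep U.
Proof.
rewrite /ep Ent_kron_mulmx // -mulmxA kron_mulmx_swap !mulmxA -(mulmxA _ U).
by rewrite Ent_kron_mulmx.
Qed.

End LocalUnitaries.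

Unset Implicit Arguments.
Set Strict Implicit.

Theorem mainTheorem3 (C : numClosedFieldType) (q : nat) (hq : (2 <= q)%N)
  (U : 'M[C]_(q * q)) (hU : dual_unitary U) :
  (forall (plus : bool) (s : seq C),
     nontrivial_eigs (Mchan plus U) s ->
     sorted (fun x y => `|y| <= `|x|) s ->
     [/\ \sum_(x <- s) `|x| ^+ 2 <= (q ^ 2 - 1)%:R * (1 - ep U),
         (forall k : nat, (1 <= k <= q ^ 2 - 1)%N ->
            `|s`_(k.-1)| <= sqrtC (1 - ep U) * sqrtC (q ^ 2 - 1)%:R / sqrtC k%:R),
         `|s`_(q ^ 2 - 2)| <= sqrtC (1 - ep U),
         `|s`_0| <= sqrtC (1 - ep U) * sqrtC (q ^ 2 - 1)%:R
       & (forall k : nat, (1 <= k <= q ^ 2 - 1)%N ->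
            1 - k%:R / (q ^ 2 - 1)%:R < ep U ->
            forall j : nat, (k <= j <= q ^ 2 - 1)%N -> `|s`_(j.-1)| < 1)]) /\
  ((q ^ 2 - 2)%:R / (q ^ 2 - 1)%:R < ep U ->
   forall u1 u2 v1 v2 : 'M[C]_q,
     unitary u1 -> unitary u2 -> unitary v1 -> unitary v2 ->
     forall (plus : bool) (s : seq C),
       nontrivial_eigs (Mchan plus (kron u1 u2 *m U *m kron v1 v2)) s ->
       forall x, x \in s -> `|x| < 1).
Proof.
have N_gt0 : (0 < q ^ 2 - 1)%N by rewrite subn_gt0 -mulnn (leq_trans _ (leq_mul hq hq)).
split=> [plus s eigs s_sorted | ep_gt u1 u2 v1 v2 uu1 uu2 uv1 uv2 plus s eigs].
  have sum_le := sum_nontrivial_eigs_le_ep hq hU eigs.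
  have size_s := size_nontrivial_eigs (ltnW hq) eigs.
  have norm_le := sorted_norm_le N_gt0 sum_le size_s s_sorted.
  split=> //; last exact: sorted_norm_lt1 N_gt0 sum_le size_s s_sorted.
  - have := norm_le (q ^ 2 - 1)%N; rewrite N_gt0 leqnn -subn1 -subnDA mulfK; first by apply.
    by rewrite sqrtC_eq0 pnatr_eq0 -lt0n.
  - by have := norm_le 1%N; rewrite N_gt0 sqrtC1 divr1; apply.
have duU' := dual_unitary_kron_mulmx uu1 uu2 uv1 uv2 hU.
apply: norm_lt1_mem N_gt0 (sum_nontrivial_eigs_le_ep hq duU' eigs) _.
by rewrite ep_kron_mulmx // -subnDA.
Qed.
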